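(* For any fence $F$, $\dim I_H(F)=\dim A_H(F)$.
   Context: A fence $\breve F(\alpha_1,\dots,\alpha_t)$ ($t\ge2$, positive integers, $\alpha_1,\alpha_t\ge2$) is the poset on $\{x_1,\dots,x_n\}$, $n=\alpha_1+\dots+\alpha_t-1$, with $a_i=\alpha_1+\dots+\alpha_i$, $a_0=0$, whose cover relations are: for $1\le j\le n-1$ with $a_{i-1}\le j<a_i$, $x_j\lessdot x_{j+1}$ if $i$ odd and $x_j\gtrdot x_{j+1}$ if $i$ even. $\mathcal J(F)$ is the set of order ideals; rowmotion $\rho$ sends $I$ to the order ideal generated by $\min(F\setminus I)$. A statistic $f:\mathcal J(F)\to\mathbb R$ is homomesic under rowmotion if its average over every $\rho$-orbit is the same constant. $\hat\chi_q(I)=1$ if $q\in I$, else 0; $\chi_q(I)=1$ if $q\in\max(I)$, else 0. $I_H(F)$ (resp. $A_H(F)$) is the subspace of $\operatorname{Span}_{\mathbb R}\{\hat\chi_q:q\in F\}$ (resp. $\operatorname{Span}_{\mathbb R}\{\chi_q:q\in F\}$) consisting of statistics homomesic under rowmotion. *)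

From HB Require Import structures.
From mathcomp Require Import all_boot all_order all_algebra.
From mathcomp Require Import reals.
Set Implicit Arguments. Unset Strict Implicit. Unset Printing Implicit Defensive.
Import Order.TTheory GRing.Theory Num.Theory.

Definition is_fence_param (alpha : seq nat) : bool :=
  [&& 2 <= size alpha, all (fun a => 0 < a) alpha,
      2 <= head 0 alpha & 2 <= last 0 alpha].

Definition fence_a (alpha : seq nat) (i : nat) : nat := sumn (take i alpha).

Definition fence_n (alpha : seq nat) : nat := (sumn alpha).-1.

(* for 1 <= j <= n-1: the step x_j -- x_{j+1} lies in block i (1-based),
   a_{i-1} <= j < a_i; it goes up (x_j <. x_{j+1}) if i is odd,
   down (x_j >. x_{j+1}) if i is even.  We index by i' = i - 1. *)
Definition step_up (alpha : seq nat) (j : nat) : bool :=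
  [exists i : 'I_(size alpha),
     [&& fence_a alpha i <= j, j < fence_a alpha i.+1 & odd i.+1]].
Definition step_down (alpha : seq nat) (j : nat) : bool :=
  [exists i : 'I_(size alpha),
     [&& fence_a alpha i <= j, j < fence_a alpha i.+1 & ~~ odd i.+1]].

(* Elements x_1, ..., x_n are represented by u : 'I_n with x_{u+1}. *)
Notation fence alpha := 'I_(fence_n alpha).

Definition fcover (alpha : seq nat) : rel (fence alpha) :=
  fun u v =>
    ((v == u.+1 :> nat) && step_up alpha u.+1)
    || ((u == v.+1 :> nat) && step_down alpha v.+1).

Definition fle (alpha : seq nat) : rel (fence alpha) := connect (@fcover alpha).

Definition is_ideal (alpha : seq nat) (I : {set fence alpha}) : bool :=
  [forall p, forall q, fle p q ==> (q \in I) ==> (p \in I)].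

Definition ideal (alpha : seq nat) := {I : {set fence alpha} | is_ideal I}.

Definition min_compl (alpha : seq nat) (I : {set fence alpha}) (q : fence alpha) :=
  (q \notin I) && [forall r, (r \notin I) ==> fle r q ==> (r == q)].

Definition max_in (alpha : seq nat) (I : {set fence alpha}) (q : fence alpha) :=
  (q \in I) && [forall r, (r \in I) ==> fle q r ==> (r == q)].

Definition rowmotion_set (alpha : seq nat) (I : {set fence alpha}) :
  {set fence alpha} :=
  [set p | [exists q, min_compl I q && fle p q]].

Lemma rowmotion_set_ideal (alpha : seq nat) (I : {set fence alpha}) :
  is_ideal (rowmotion_set I).
Proof.
apply/forallP=> p; apply/forallP=> q; apply/implyP=> lepq; apply/implyP.
rewrite !inE => /existsP [r /andP [mr leqr]].
by apply/existsP; exists r; rewrite mr /=; exact: connect_trans lepq leqr.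
Qed.

Definition rowmotion (alpha : seq nat) (I : ideal alpha) : ideal alpha :=
  exist _ (rowmotion_set (sval I)) (rowmotion_set_ideal (sval I)).

Section Stats.
Local Open Scope ring_scope.
Variable R : realType.
Variable alpha : seq nat.

Definition stat := {ffun ideal alpha -> R^o}.

Definition rho_orbit (I : ideal alpha) : {set ideal alpha} :=
  [set J | fconnect (@rowmotion alpha) I J].

Definition orbit_avg (f : stat) (I : ideal alpha) : R :=
  (\sum_(J in rho_orbit I) f J) / #|rho_orbit I|%:R.

Definition homomesic (f : stat) : Prop :=
  exists c : R, forall I : ideal alpha, orbit_avg f I = c.

Definition chihat (q : fence alpha) : stat :=
  [ffun I : ideal alpha => if q \in sval I then 1 else 0].
Definition chi (q : fence alpha) : stat :=
  [ffun I : ideal alpha => if max_in (sval I) q then 1 else 0].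

Definition span_chihat : {vspace stat} := <<[seq chihat q | q <- enum (fence alpha)]>>%VS.
Definition span_chi : {vspace stat} := <<[seq chi q | q <- enum (fence alpha)]>>%VS.

Definition I_H (f : stat) : Prop := f \in span_chihat /\ homomesic f.
Definition A_H (f : stat) : Prop := f \in span_chi /\ homomesic f.

Definition has_dim (H : stat -> Prop) (d : nat) : Prop :=
  exists s : seq stat,
    [/\ size s = d, free s, (forall v, v \in s -> H v)
      & forall v, H v -> v \in <<s>>%VS].

End Stats.

(* Write S, S' for the spans of the chihat q and of the chi q, and H for the
   space of homomesies.  Since max (rho I) = min (F \ I), the orbit sums of
   chi q agree with those of the indicator of q \in min (F \ I).  In a fence
   every q has no upper cover (chi q = chihat q), a unique upper cover u
   (chi q = chihat q - chihat u), or no lower cover; in the last case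
   q \in min (F \ I) iff q \notin I, so chi q + chihat q is homomesic with
   average 1.  Hence S + H = S' + H.  Both families are free of size |F|
   (evaluate them on principal ideals), so dim (S :&: H) = dim (S' :&: H) by
   dim (U + W) + dim (U :&: W) = dim U + dim W. *)

From HB Require Import structures.
From mathcomp Require Import all_boot all_order all_algebra.
From mathcomp Require Import reals zify ring.
Set Implicit Arguments. Unset Strict Implicit. Unset Printing Implicit Defensive.
Import Order.TTheory GRing.Theory Num.Theory.

Section ConnectSteps.
Variables (T : finType) (e : rel T).

Lemma connect_first_step x y :
  connect e x y -> x != y -> exists2 z, e x z & connect e z y.
Proof.
case/connectP=> [[|z p]] /= xp -> //=; first by rewrite eqxx.
by case/andP: xp => xz zp _; exists z => //; apply/connectP; exists p.
Qed.

Lemma connect_last_step x y :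
  connect e x y -> x != y -> exists2 z, connect e x z & e z y.
Proof.
case/connectP=> p; case/lastP: p => [|p z] /= xp -> //=; first by rewrite eqxx.
move: xp; rewrite rcons_path last_rcons => /andP[xp pz] _.
by exists (last x p) => //; apply/connectP; exists p.
Qed.

End ConnectSteps.

Section GradedRelation.
Local Open Scope ring_scope.
Variables (T : finType) (e : rel T) (h : T -> int).
Hypothesis e_graded : forall x y, e x y -> h y = h x + 1.

Lemma path_graded x p : path e x p -> h (last x p) = h x + (size p)%:Z.
Proof.
elim: p x => [|y p IHp] x /=; first by rewrite addr0.
by case/andP=> /e_graded exy /IHp ->; rewrite exy; lia.
Qed.

Lemma connect_graded_le x y : connect e x y -> h x <= h y.
Proof. by case/connectP=> p /path_graded hp ->; rewrite hp lerDl. Qed.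

Lemma connect_graded_lt x y : connect e x y -> x != y -> h x < h y.
Proof.
case/connectP=> [[|z p]] /path_graded hp -> /=; first by rewrite eqxx.
by move=> _; rewrite hp /=; lia.
Qed.

Lemma connect_graded_anti x y : connect e x y -> connect e y x -> x = y.
Proof.
move=> xy yx; apply/eqP; apply: contraT => neq.
by have := connect_graded_lt xy neq; rewrite ltNge connect_graded_le.
Qed.

End GradedRelation.

Section FenceOrder.
Variable alpha : seq nat.
Local Notation F := (fence alpha).

Lemma fence_a_mono i j : i <= j -> fence_a alpha i <= fence_a alpha j.
Proof. by move=> lij; rewrite /fence_a -(subnKC lij) takeD sumn_cat leq_addr. Qed.

Lemma step_up_down_excl j : step_up alpha j -> ~~ step_down alpha j.
Proof.
case/existsP=> i /and3P[ai_j j_ai1 odd_i].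
apply/negP => /existsP[k /and3P[ak_j j_ak1]].
have e : nat_of_ord k = i.
  apply/eqP; rewrite eqn_leq; apply/andP; split; rewrite leqNgt; apply/negP => lt.
  - by have := leq_trans (fence_a_mono lt) ak_j; rewrite leqNgt j_ai1.
  - by have := leq_trans (fence_a_mono lt) ai_j; rewrite leqNgt j_ak1.
by rewrite e odd_i.
Qed.

Definition fheight (u : nat) : int :=
  (\sum_(k < u) if step_up alpha k.+1 then 1 else -1)%R.

Lemma fheightS u :
  fheight u.+1 = (fheight u + if step_up alpha u.+1 then 1 else -1)%R.
Proof. by rewrite /fheight big_ord_recr. Qed.

Lemma fcover_fheight (u v : F) : fcover u v -> fheight v = (fheight u + 1)%R.
Proof.
case/orP=> /andP[/eqP-> step]; first by rewrite fheightS step.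
by rewrite fheightS (negPf (contraL (@step_up_down_excl _) step)) addrNK.
Qed.

Lemma fle_refl (u : F) : fle u u. Proof. exact: connect0. Qed.

Lemma fle_trans (u v w : F) : fle u v -> fle v w -> fle u w.
Proof. exact: connect_trans. Qed.

Lemma fcover_fle (u v : F) : fcover u v -> fle u v.
Proof. exact: connect1. Qed.

Lemma fle_anti (u v : F) : fle u v -> fle v u -> u = v.
Proof. exact: (connect_graded_anti (h := fun w : F => fheight w) fcover_fheight). Qed.

Lemma fle_fheight_lt (u v : F) : fle u v -> u != v -> (fheight u < fheight v)%R.
Proof. exact: (connect_graded_lt (h := fun w : F => fheight w) fcover_fheight). Qed.

Lemma fcover_neq (u v : F) : fcover u v -> u != v.
Proof. by move=> uv; apply: contra_eqN (fcover_fheight uv) => /eqP->; lia. Qed.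

Lemma fcover_ind (P : pred F) :
  (forall q, (forall u, fcover q u -> P u) -> P q) -> forall q, P q.
Proof.
move=> IH q; apply/idPn => nPq.
have [m /= nPm max_m] := arg_maxP (fun w : F => fheight w) (nPq : [pred q | ~~ P q] q).
apply: (negP nPm); apply: IH => u mu; apply/idPn => /max_m /=.
by rewrite (fcover_fheight mu) gerDl.
Qed.

Lemma two_upper_covers_no_lower (q u1 u2 l : F) :
  fcover q u1 -> fcover q u2 -> u1 != u2 -> ~~ fcover l q.
Proof.
have cover_cases (u : F) : fcover q u ->
    (u = q.+1 :> nat /\ step_up alpha q.+1) \/ (q = u.+1 :> nat /\ step_down alpha q).
  case/orP=> /andP[/eqP e s]; first by left.
  by right; rewrite e.
move=> /cover_cases c1 /cover_cases c2 ne.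
have [su sd] : step_up alpha q.+1 /\ step_down alpha q.
  case: c1 c2 => [[e1 s1]|[e1 s1]] [[e2 s2]|[e2 s2]] //;
  by case/negP: ne; apply/eqP/val_inj => /=; lia.
apply/negP; case/orP=> /andP[/eqP e s].
- by rewrite -e in s; rewrite (negPf (step_up_down_excl s)) in sd.
- by rewrite (negPf (step_up_down_excl su)) in s.
Qed.

Lemma fcover_trichotomy (q : F) :
  [\/ forall u, ~~ fcover q u,
      exists2 u, fcover q u & forall u', fcover q u' -> u' = u
    | forall l, ~~ fcover l q].
Proof.
have [u1 qu1|no_upper] := pickP (fcover q); last by constructor 1 => u; rewrite no_upper.
have [u2 /andP[qu2 neq]|unique] := pickP (fun u => fcover q u && (u != u1)).
  by constructor 3 => l; exact: two_upper_covers_no_lower qu2 qu1 neq.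
constructor 2; exists u1 => // u qu; apply/eqP.
by move: (unique u); rewrite qu => /negbFE.
Qed.

End FenceOrder.

Section Ideals.
Variable alpha : seq nat.
Local Notation F := (fence alpha).

Lemma is_idealP (I : {set F}) :
  reflect (forall p q, fle p q -> q \in I -> p \in I) (is_ideal I).
Proof.
apply: (iffP forallP) => [idI p q pq | idI p].
- by have /forallP/(_ q)/implyP/(_ pq)/implyP := idI p.
- by apply/forallP => q; apply/implyP => pq; apply/implyP; exact: idI.
Qed.

Lemma ideal_down (I : ideal alpha) (p q : F) : fle p q -> q \in sval I -> p \in sval I.
Proof. exact: (is_idealP _ (svalP I)). Qed.

Lemma max_in_no_upper (I : {set F}) q :
  (forall u, ~~ fcover q u) -> max_in I q = (q \in I).
Proof.
move=> no_upper; rewrite /max_in andb_idr // => _.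
apply/forallP=> r; apply/implyP=> _; apply/implyP=> qr.
apply: contraT; rewrite eq_sym => neq.
have [u qu _] := connect_first_step qr neq.
by rewrite (negPf (no_upper u)) in qu.
Qed.

Lemma min_compl_no_lower (I : {set F}) q :
  (forall l, ~~ fcover l q) -> min_compl I q = (q \notin I).
Proof.
move=> no_lower; rewrite /min_compl andb_idr // => _.
apply/forallP=> r; apply/implyP=> _; apply/implyP=> rq; apply: contraT => neq.
have [l _ lq] := connect_last_step rq neq.
by rewrite (negPf (no_lower l)) in lq.
Qed.

Lemma max_in_unique_upper (I : ideal alpha) q u :
  fcover q u -> (forall u', fcover q u' -> u' = u) ->
  max_in (sval I) q = (q \in sval I) && (u \notin sval I).
Proof.
move=> qu unique; rewrite /max_in; case: (q \in sval I) => //=.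
apply/forallP/idP => [max_q | uI r].
- apply/negP=> uI; move: (max_q u); rewrite uI (fcover_fle qu) /=.
  by apply/negP; rewrite eq_sym fcover_neq.
- apply/implyP => rI; apply/implyP => qr; apply: contraT; rewrite eq_sym => neq.
  have [u' qu' u'r] := connect_first_step qr neq.
  by rewrite (unique _ qu') in u'r; rewrite (ideal_down u'r rI) in uI.
Qed.

Lemma max_in_rowmotion (I : {set F}) q : max_in (rowmotion_set I) q = min_compl I q.
Proof.
have min_in_row m : min_compl I m -> m \in rowmotion_set I.
  by move=> min_m; rewrite inE; apply/existsP; exists m; rewrite min_m fle_refl.
apply/idP/idP.
- case/andP => qR /forallP max_q.
  move: qR; rewrite inE => /existsP[m /andP[min_m qm]].
  by move: (max_q m); rewrite min_in_row // qm => /eqP <-.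
- move=> /[dup] min_q /andP[qI _]; rewrite /max_in min_in_row //=.
  apply/forallP => r; apply/implyP; rewrite inE => /existsP[m /andP[min_m rm]].
  apply/implyP => qr; case/andP: min_m => mI /forallP/(_ q).
  rewrite qI (fle_trans qr rm) /= => /eqP eq_qm.
  by rewrite -eq_qm in rm; apply/eqP; exact: fle_anti rm qr.
Qed.

Lemma min_compl_exists (I : {set F}) p :
  p \notin I -> exists2 m, min_compl I m & fle m p.
Proof.
move=> pI; have Pp : (p \notin I) && fle p p by rewrite pI fle_refl.
have [m /andP[mI mp] min_m] :=
  arg_minP (fun w : F => fheight alpha w) (Pp : [pred r | (r \notin I) && fle r p] p).
exists m => //; rewrite /min_compl mI; apply/forallP => r.
apply/implyP => rI; apply/implyP => rm; apply: contraT => neq.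
have := min_m r; rewrite /= rI (fle_trans rm mp) => /(_ isT).
by rewrite leNgt fle_fheight_lt.
Qed.

Lemma ideal_memE (I : ideal alpha) p :
  (p \in sval I) = ~~ [exists m, min_compl (sval I) m && fle m p].
Proof.
apply/idP/idP => [pI | ].
- by apply/existsP => -[m /andP[/andP[mI _] mp]]; rewrite (ideal_down mp pI) in mI.
- apply: contraR => /min_compl_exists[m min_m mp].
  by apply/existsP; exists m; rewrite min_m mp.
Qed.

Lemma rowmotion_inj : injective (@rowmotion alpha).
Proof.
move=> I J /(congr1 sval) /= eqIJ; apply/val_inj/setP => p.
rewrite !ideal_memE; congr (~~ _); apply: eq_existsb => m.
by rewrite -!max_in_rowmotion eqIJ.
Qed.

Lemma set0_is_ideal : is_ideal (set0 : {set F}).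
Proof. by apply/is_idealP => p q _; rewrite inE. Qed.

Lemma down_set_is_ideal p : is_ideal [set r : F | fle r p].
Proof. by apply/is_idealP => a b ab; rewrite !inE; exact: fle_trans. Qed.

Lemma strict_down_set_is_ideal p : is_ideal [set r : F | fle r p & r != p].
Proof.
apply/is_idealP => a b ab; rewrite !inE => /andP[bp neq]; rewrite (fle_trans ab bp) /=.
by apply: contra_neq neq => eq_ap; rewrite eq_ap in ab; exact: fle_anti.
Qed.

Definition ideal0 : ideal alpha := exist (@is_ideal alpha) _ set0_is_ideal.
Definition down_ideal p : ideal alpha := exist (@is_ideal alpha) _ (down_set_is_ideal p).
Definition strict_down_ideal p : ideal alpha :=
  exist (@is_ideal alpha) _ (strict_down_set_is_ideal p).

Lemma max_in_down_ideal p q : max_in (sval (down_ideal p)) q = (q == p).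
Proof.
rewrite /max_in /= inE; apply/idP/idP.
- by case/andP=> qp /forallP/(_ p); rewrite inE fle_refl qp => /eqP ->.
- move/eqP->; rewrite fle_refl /=; apply/forallP=> r; rewrite inE.
  by apply/implyP=> rp; apply/implyP=> pr; apply/eqP; exact: fle_anti.
Qed.

End Ideals.

Section LinearAlgebra.
Local Open Scope ring_scope.
Variables (K : fieldType) (vT : vectType K).

Lemma free_map_enum (T : finType) (g : T -> vT) :
  (forall k : T -> K, \sum_t k t *: g t = 0 -> forall t, k t = 0) ->
  free [seq g t | t <- enum T].
Proof.
move=> g_free; have sz : size [seq g t | t <- enum T] == #|T| by rewrite size_map -cardE.
apply/(@freeP _ _ _ (Tuple sz)) => k k0 i.
have := g_free (k \o enum_rank) _ (enum_val i); rewrite /= enum_valK; apply.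
rewrite -[RHS]k0 (reindex (@enum_val T T)) /=; last first.
  by exists enum_rank => x _; [rewrite enum_valK | rewrite enum_rankK].
apply: eq_bigr => j _; rewrite enum_valK; congr (_ *: _).
by rewrite -[[seq g t | t <- enum T]]/[seq g t | t in T] nth_image.
Qed.

Lemma dimv_cap_eq (U V W : {vspace vT}) :
  \dim U = \dim V -> (U + W = V + W)%VS -> \dim (U :&: W) = \dim (V :&: W).
Proof.
move=> dimUV sumUV; apply/eqP; rewrite -(eqn_add2l (\dim (V + W))).
by rewrite dimv_sum_cap -sumUV dimv_sum_cap dimUV.
Qed.

End LinearAlgebra.

Section Homomesy.
Local Open Scope ring_scope.
Variables (R : realType) (alpha : seq nat).
Local Notation F := (fence alpha).
Local Notation stat := (stat R alpha).
Local Notation rho_orbit := (@rho_orbit alpha).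
Local Notation orbit_avg := (@orbit_avg R alpha).
Local Notation homomesic := (@homomesic R alpha).
Local Notation chi := (@chi R alpha).
Local Notation chihat := (@chihat R alpha).

Definition orbit_avg_dev (f : stat) : stat :=
  [ffun I => orbit_avg f I - orbit_avg f (ideal0 alpha)].

Fact orbit_avg_dev_is_linear : linear orbit_avg_dev.
Proof.
move=> a f g; apply/ffunP=> I; rewrite !ffunE /orbit_avg.
under eq_bigr do rewrite !ffunE.
under [in X in _ - X]eq_bigr do rewrite !ffunE.
rewrite !big_split /= -!scaler_sumr /GRing.scale /=; ring.
Qed.

HB.instance Definition _ :=
  GRing.isLinear.Build R stat stat *:%R orbit_avg_dev orbit_avg_dev_is_linear.

Definition homomesy_space : {vspace stat} := lker (linfun orbit_avg_dev).

Lemma homomesicP f : homomesic f <-> f \in homomesy_space.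
Proof.
rewrite memv_ker lfunE /=; split.
- by case=> c avg_f; apply/eqP/ffunP => I; rewrite !ffunE !avg_f subrr.
- move/eqP/ffunP => dev0; exists (orbit_avg f (ideal0 alpha)) => I.
  by apply/eqP; rewrite -subr_eq0; move: (dev0 I); rewrite !ffunE => ->.
Qed.

Lemma card_rho_orbit_neq0 I : #|rho_orbit I|%:R != 0 :> R.
Proof. by rewrite pnatr_eq0 -lt0n; apply/card_gt0P; exists I; rewrite inE connect0. Qed.

Lemma orbit_sum_rowmotion (f : stat) I :
  \sum_(J in rho_orbit I) f (rowmotion J) = \sum_(J in rho_orbit I) f J.
Proof.
rewrite [RHS](reindex_inj (@rowmotion_inj alpha)); apply: eq_bigl => J.
by rewrite !inE -same_fconnect1_r //; exact: rowmotion_inj.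
Qed.

Lemma chi_rowmotion_no_lower q I :
  (forall l, ~~ fcover l q) -> chi q (rowmotion I) = 1 - chihat q I.
Proof.
move=> no_lower; rewrite !ffunE /= max_in_rowmotion min_compl_no_lower //.
by case: (q \in sval I); rewrite ?subrr ?subr0.
Qed.

Lemma homomesic_chi_add_chihat q :
  (forall l, ~~ fcover l q) -> homomesic (chi q + chihat q).
Proof.
move=> no_lower; exists 1 => I; rewrite /orbit_avg.
under eq_bigr do rewrite ffunE.
rewrite big_split /= -orbit_sum_rowmotion -big_split /=.
under eq_bigr do rewrite chi_rowmotion_no_lower // subrK.
by rewrite sumr_const divff // card_rho_orbit_neq0.
Qed.

Lemma chi_no_upper q : (forall u, ~~ fcover q u) -> chi q = chihat q.
Proof. by move=> no_upper; apply/ffunP=> I; rewrite !ffunE max_in_no_upper. Qed.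

Lemma chi_unique_upper q u : fcover q u -> (forall u', fcover q u' -> u' = u) ->
  chi q = chihat q - chihat u.
Proof.
move=> qu unique; apply/ffunP=> I; rewrite !ffunE (max_in_unique_upper _ qu unique).
have [uI|] := boolP (u \in sval I).
  by rewrite (ideal_down (fcover_fle qu) uI) subrr.
by case: (q \in sval I); rewrite subr0.
Qed.

Lemma free_chihat : free [seq chihat q | q <- enum F].
Proof.
apply: free_map_enum => k sum0 p.
have := congr1 (fun f : stat => f (down_ideal p) - f (strict_down_ideal p)) sum0.
rewrite /= !ffunE subrr !sum_ffunE -sumrB (bigD1 p) //= big1 => [|q neq].
  rewrite !ffunE /= !inE fle_refl eqxx /= scaler0 subr0 addr0.
  by move/eqP; rewrite scaler_eq0 oner_eq0 orbF => /eqP.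
by rewrite /= !ffunE /= !inE neq andbT subrr.
Qed.

Lemma free_chi : free [seq chi q | q <- enum F].
Proof.
apply: free_map_enum => k sum0 p.
have := congr1 (fun f : stat => f (down_ideal p)) sum0.
rewrite /= !ffunE !sum_ffunE (bigD1 p) //= big1 => [|q neq].
  rewrite !ffunE max_in_down_ideal eqxx addr0.
  by move/eqP; rewrite scaler_eq0 oner_eq0 orbF => /eqP.
by rewrite /= !ffunE max_in_down_ideal (negPf neq) scaler0.
Qed.

Local Notation H := homomesy_space.
Local Notation S := (span_chihat R alpha).
Local Notation S' := (span_chi R alpha).

Lemma chihat_in_span q : chihat q \in S.
Proof. by apply: memv_span; apply/mapP; exists q; rewrite ?mem_enum. Qed.

Lemma chi_in_span q : chi q \in S'.
Proof. by apply: memv_span; apply/mapP; exists q; rewrite ?mem_enum. Qed.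

Lemma chi_in_span_chihat_add q : chi q \in (S + H)%VS.
Proof.
have inS f : f \in S -> f \in (S + H)%VS by apply/subvP/addvSl.
case: (fcover_trichotomy q) => [no_upper | [u qu unique] | no_lower].
- by rewrite chi_no_upper //; apply/inS/chihat_in_span.
- by rewrite (chi_unique_upper qu unique); apply/inS/rpredB; apply: chihat_in_span.
- rewrite -[chi q](addrK (chihat q)) addrC; apply: memv_add.
    by rewrite rpredN chihat_in_span.
  exact/homomesicP/homomesic_chi_add_chihat.
Qed.

Lemma chihat_in_span_chi_add q : chihat q \in (S' + H)%VS.
Proof.
have inS' f : f \in S' -> f \in (S' + H)%VS by apply/subvP/addvSl.
move: q; apply: (@fcover_ind _ [pred q | chihat q \in (S' + H)%VS]) => q IH /=.
case: (fcover_trichotomy q) => [no_upper | [u qu unique] | no_lower].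
- by rewrite -chi_no_upper //; apply/inS'/chi_in_span.
- rewrite -[chihat q](subrK (chihat u)) -(chi_unique_upper qu unique).
  by apply: rpredD; [apply/inS'/chi_in_span | exact: IH].
- rewrite -[chihat q](addKr (chi q)); apply: memv_add.
    by rewrite rpredN chi_in_span.
  exact/homomesicP/homomesic_chi_add_chihat.
Qed.

Lemma span_chihat_add_homomesy : (S + H = S' + H)%VS.
Proof.
apply/eqP; rewrite eqEsubv !subv_add !addvSr !andbT.
by apply/andP; split; apply/span_subvP => _ /mapP[q _ ->];
  [exact: chihat_in_span_chi_add | exact: chi_in_span_chihat_add].
Qed.

Lemma dim_span_chihat_chi : \dim S = \dim S'.
Proof. by rewrite (eqP free_chihat) (eqP free_chi) !size_map. Qed.

Lemma I_HP f : I_H f <-> f \in (S :&: H)%VS.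
Proof.
rewrite memv_cap; split => [[-> /homomesicP ->] // | /andP[Sf Hf]].
by split; last exact/homomesicP.
Qed.

Lemma A_HP f : A_H f <-> f \in (S' :&: H)%VS.
Proof.
rewrite memv_cap; split => [[-> /homomesicP ->] // | /andP[S'f Hf]].
by split; last exact/homomesicP.
Qed.

Lemma has_dim_vspace (P : stat -> Prop) (W : {vspace stat}) :
  (forall f, P f <-> f \in W) -> has_dim P (\dim W).
Proof.
move=> PW; exists (vbasis W); split.
- exact: size_tuple.
- exact: basis_free (vbasisP W).
- by move=> f /vbasis_mem /PW.
- by move=> f /PW; rewrite (span_basis (vbasisP W)).
Qed.

End Homomesy.

Theorem theorem7p1 (R : realType) (alpha : seq nat) :
  is_fence_param alpha ->
  exists d : nat, has_dim (@I_H R alpha) d /\ has_dim (@A_H R alpha) d.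
Proof.
move=> _; exists (\dim (span_chihat R alpha :&: homomesy_space R alpha)); split.
  exact/has_dim_vspace/I_HP.
rewrite (dimv_cap_eq (dim_span_chihat_chi R alpha) (span_chihat_add_homomesy R alpha)).
exact/has_dim_vspace/A_HP.
Qed.
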